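(* Let $x\in\{\ell,r\}$ and $w\in\mathcal{A}^*$. Let $(\mathfrak{d}^x_1(w),\dots,\mathfrak{d}^x_k(w))$ be the $x$-left-to-right minimal subsequence of $w$, and let $c_1,\dots,c_j$ be the words obtained by reading the columns of the tableau $\mathfrak{R}_x(w)$ from left to right, each column read from top to bottom. Then $k=j$ and $\mathfrak{d}^x_i(w)=c_i$ for all $i\in\{1,\dots,k\}$.
   Context: Let $\mathcal{A}=\{1<2<3<\cdots\}$ be the positive integers viewed as a totally ordered alphabet. An lPS tableau is a finite (possibly empty) sequence of nonempty bottom-justified columns of boxes filled with elements of $\mathcal{A}$, such that the entries of each column are strictly decreasing from top to bottom and the bottom entries of the columns form a weakly increasing sequence from left to right. An rPS tableau is defined in the same way but with columns weakly decreasing from top to bottom and the bottom row strictly increasing from left to right. Right insertion of a symbol $a$ into an lPS tableau $B$: if $a$ is greater than or equal to every entry of the bottom row, append a new column consisting of $a$ at the right end; otherwise, let $z$ be the leftmost bottom-row entry with $z>a$ and put $a$ in a new box at the bottom of the column of $z$ (the previous entries of that column move up one box). Right insertion into an rPS tableau is the same except that a new column is created iff $a$ is strictly greater than every bottom-row entry, and otherwise $z$ is the leftmost bottom-row entry with $z\geq a$. For a word $w=w_1\cdots w_k$, $\mathfrak{R}_\ell(w)$ (resp. $\mathfrak{R}_r(w)$) is obtained by starting with the empty lPS (resp. rPS) tableau and right-inserting $w_1,\dots,w_k$ in order. Decreasing subsequence: for a nonempty word $w$, $\mathfrak{d}^\ell(w)$ (resp. $\mathfrak{d}^r(w)$) is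 the subsequence of $w$ whose first symbol is the first symbol of $w$, and whose $(i+1)$-th symbol is the first symbol of $w$ located to the right of (the occurrence of) the $i$-th symbol that is strictly less than (resp. less than or equal to) it; the process stops when no such symbol exists. For the empty word it is empty. Left-to-right minimal subsequence: $\mathfrak{d}^x_1(w)=\mathfrak{d}^x(w)$, and for $i\geq2$, $\mathfrak{d}^x_i(w)=\mathfrak{d}^x(w_{(i)})$, where $w_{(i)}$ is obtained from $w$ by deleting the occurrences (positions) used in $\mathfrak{d}^x_1(w),\dots,\mathfrak{d}^x_{i-1}(w)$; the $x$-left-to-right minimal subsequence of $w$ is the sequence of the nonempty words $\mathfrak{d}^x_1(w),\dots,\mathfrak{d}^x_k(w)$ so obtained. *)

From mathcomp Require Import all_boot.
Set Implicit Arguments. Unset Strict Implicit. Unset Printing Implicit Defensive.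

(* Alphabet: positive integers (nat with all letters > 0, imposed in the
   theorem).  Words are seq nat. *)

Inductive side := Lside | Rside.

(* A PS tableau is a sequence of columns (left to right); each column is
   listed from TOP to BOTTOM, so its bottom entry is its last element. *)
Definition tableau := seq (seq nat).

Definition bumps (x : side) (a z : nat) : bool :=
  match x with Lside => a < z | Rside => a <= z end.

Fixpoint rins (x : side) (a : nat) (T : tableau) : tableau :=
  match T with
  | [::] => [:: [:: a]]
  | c :: T' => if bumps x a (last 0 c) then rcons c a :: T'
               else c :: rins x a T'
  end.

Definition Rtab (x : side) (w : seq nat) : tableau :=
  foldl (fun T a => rins x a T) [::] w.

Definition column_words (T : tableau) : seq (seq nat) := T.

Definition takes (x : side) (b cur : nat) : bool :=
  match x with Lside => b < cur | Rside => b <= cur end.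

Fixpoint dscan (x : side) (cur : nat) (w : seq nat) : seq nat * seq nat :=
  match w with
  | [::] => ([::], [::])
  | b :: w' =>
    if takes x b cur then let: (c, r) := dscan x b w' in (b :: c, r)
    else let: (c, r) := dscan x cur w' in (c, b :: r)
  end.

Definition dsub (x : side) (w : seq nat) : seq nat * seq nat :=
  match w with
  | [::] => ([::], [::])
  | a :: w' => let: (c, r) := dscan x a w' in (a :: c, r)
  end.

Definition dec (x : side) (w : seq nat) : seq nat := (dsub x w).1.

(* Iterate: d_1 = d(w), d_i = d(w_(i)), stopping when the remaining word is
   empty (the fuel size w suffices since each step removes >= 1 letter). *)
Fixpoint lrmin_aux (x : side) (n : nat) (w : seq nat) : seq (seq nat) :=
  match n with
  | 0 => [::]
  | n'.+1 => match w with
             | [::] => [::]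
             | _ => let: (c, r) := dsub x w in c :: lrmin_aux x n' r
             end
  end.

Definition lrmin (x : side) (w : seq nat) : seq (seq nat) :=
  lrmin_aux x (size w) w.

From mathcomp Require Import all_boot.

(* Right-inserting a letter [a] into R_x(w) mirrors what appending [a] to [w]
   does to the left-to-right minimal subsequence: [a] extends d_1(w) exactly
   when it can follow the last letter of d_1(w), i.e. when the bottom of the
   first column bumps it; otherwise [a] is left in the remaining word, and we
   recurse on the remaining columns.  Hence lrmin and R_x satisfy the same
   recursion on [rcons] and coincide. *)

Lemma takes_bumps x a z : takes x a z = bumps x a z.
Proof. by case: x. Qed.

Lemma size_dscan x cur w :
  size (dscan x cur w).1 + size (dscan x cur w).2 = size w.
Proof.
elim: w cur => [|b w IH] cur //=.
case: ifP => _.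
  by case E: (dscan x b w) => [c r] /=; rewrite -(IH b) E.
by case E: (dscan x cur w) => [c r] /=; rewrite addnS -(IH cur) E.
Qed.

Lemma dscan_rcons x cur w a :
  dscan x cur (rcons w a) =
  let: (c, r) := dscan x cur w in
  if takes x a (last cur c) then (rcons c a, r) else (c, rcons r a).
Proof.
elim: w cur => [|b w IH] cur /=; first by case: ifP.
by case: ifP => _; rewrite IH; [case: (dscan x b w) | case: (dscan x cur w)];
  move=> c r /=; case: ifP.
Qed.

Lemma size_dsub_rest_lt x b w : size (dsub x (b :: w)).2 < size (b :: w).
Proof.
rewrite /=; case E: (dscan x b w) => [c r] /=.
by rewrite ltnS -(size_dscan x b w) E leq_addl.
Qed.

Lemma lrmin_aux_fuel x n m w : size w <= n -> size w <= m ->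
  lrmin_aux x n w = lrmin_aux x m w.
Proof.
elim: n m w => [|n IH] [|m] [|b w] //= Hn Hm.
have := size_dsub_rest_lt x b w; rewrite /=.
case: (dscan x b w) => c r /= Hr; congr (_ :: _).
by apply: IH; rewrite -ltnS (leq_trans Hr).
Qed.

Lemma lrmin_cons x b w :
  lrmin x (b :: w) = let: (c, r) := dsub x (b :: w) in c :: lrmin x r.
Proof.
have := size_dsub_rest_lt x b w; rewrite /lrmin /=.
by case: (dscan x b w) => c r /= Hr; rewrite (@lrmin_aux_fuel x _ (size r)).
Qed.

Lemma lrmin_rcons x w a : lrmin x (rcons w a) = rins x a (lrmin x w).
Proof.
have [n] := ubnP (size w); elim: n w => // n IH [|b w] Hs; first by [].
have := size_dsub_rest_lt x b w.
rewrite rcons_cons !lrmin_cons /= dscan_rcons.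
case: (dscan x b w) => c r /= Hr.
rewrite takes_bumps; case: ifP => _ //.
by rewrite IH // (leq_trans Hr).
Qed.

Lemma lrmin_Rtab x w : lrmin x w = Rtab x w.
Proof.
elim/last_ind: w => [|w a IH] //.
by rewrite lrmin_rcons IH /Rtab foldl_rcons.
Qed.

Theorem proposition3p12 (x : side) (w : seq nat) :
  all (fun a => 0 < a) w ->
  size (lrmin x w) = size (column_words (Rtab x w)) /\
  forall i, i < size (lrmin x w) ->
    nth [::] (lrmin x w) i = nth [::] (column_words (Rtab x w)) i.
Proof. by move=> _; rewrite /column_words lrmin_Rtab. Qed.
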